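(* Suppose that there exists a countably infinite partition of $\Omega$ into measurable sets of strictly positive probability. Let $E$ be a free $L^0$-module. Then $E$ is stable if and only if $E$ has finite rank.
   Context: $(\Omega,\mathcal F,\mathbb P)$ is a probability space and $L^0=L^0(\Omega,\mathcal F,\mathbb P)$ is the commutative ring of real-valued measurable functions modulo $\mathbb P$-a.e. equality; measurable sets are identified when they differ by a null set. An $L^0$-module $E$ is called stable if for every countable measurable partition $(A_k)$ of $\Omega$ and every sequence $(x_k)$ in $E$ there exists a unique $x\in E$ with $1_{A_k}x=1_{A_k}x_k$ for all $k$. A free $L^0$-module has a well-defined rank (cardinality of a basis), since $L^0$ is commutative. *)

From HB Require Import structures.
From mathcomp Require Import all_boot all_order all_algebra ring_quotient.
From mathcomp Require Import all_classical all_reals.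
From mathcomp Require Import all_analysis measurable_realfun.
Set Implicit Arguments. Unset Strict Implicit. Unset Printing Implicit Defensive.
Import Order.TTheory GRing.Theory Num.Theory.
Local Open Scope classical_set_scope.
Local Open Scope ring_scope.

Section L0.
Context d (T : measurableType d) (R : realType) (P : probability T R).

Definition aenull : {pred {mfun T >-> R}} :=
  fun f => `[< {ae P, forall x, f x = 0} >].

Lemma aenull_idealr_closed : idealr_closed aenull.
Proof.
split.
- by apply/asboolP; apply: aeW.
- apply/negP => /asboolP H.
  have PT : (0 < P setT)%E by rewrite probability_setT lte01.
  have [x /=] := @filter_ex _ _ (ae_properfilter_algebraOfSetsType PT) _ H.
  by move=> /eqP; rewrite oner_eq0.
- move=> a u v /asboolP Hu /asboolP Hv; apply/asboolP.
  apply: filterS2 Hu Hv => x /= hu hv.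
  change (a x * u x + v x = 0).
  by rewrite hu hv mulr0 addr0.
Qed.

HB.instance Definition _ := isIdealr.Build {mfun T >-> R} aenull
  aenull_idealr_closed.

Definition L0 : comNzRingType := {ideal_quot aenull}.

Definition L0ind (A : set T) : L0 :=
  match pselect (measurable A) with
  | left mA => (\pi_L0 (indic_mfun A mA))%qT
  | right _ => 0
  end.

(* Countable measurable partitions of Omega, indexed by nat
   (finite partitions are obtained by padding with empty sets). *)
Definition meas_partition (A : nat -> set T) : Prop :=
  [/\ forall k, measurable (A k), trivIset setT A & \bigcup_k A k = setT].

Definition stable (E : lmodType L0) : Prop :=
  forall A : nat -> set T, meas_partition A ->
  forall x : nat -> E,
    exists! y : E, forall k, L0ind (A k) *: y = L0ind (A k) *: x k.

Definition lin_indep (E : lmodType L0) (B : set E) : Prop :=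
  forall (s : seq E) (c : E -> L0), uniq s -> (forall b, b \in s -> B b) ->
    \sum_(b <- s) c b *: b = 0 -> forall b, b \in s -> c b = 0.

Definition spanning (E : lmodType L0) (B : set E) : Prop :=
  forall v : E, exists (s : seq E) (c : E -> L0),
    (forall b, b \in s -> B b) /\ v = \sum_(b <- s) c b *: b.

Definition basis (E : lmodType L0) (B : set E) : Prop :=
  lin_indep B /\ spanning B.

Definition free_module (E : lmodType L0) : Prop := exists B : set E, basis B.

(* finite rank: E has a finite basis (rank is well defined over L^0). *)
Definition finite_rank (E : lmodType L0) : Prop :=
  exists B : set E, basis B /\ finite_set B.

End L0.

From Pilot Require Import Defs.
From HB Require Import structures.
From mathcomp Require Import all_boot all_order all_algebra ring_quotient.
From mathcomp Require Import all_classical all_reals.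
From mathcomp Require Import all_analysis measurable_realfun.
Set Implicit Arguments. Unset Strict Implicit. Unset Printing Implicit Defensive.
Import Order.TTheory GRing.Theory Num.Theory.
Local Open Scope classical_set_scope.
Local Open Scope ring_scope.

(* With a finite basis, stability reduces to two properties of L^0 itself:
   a family of scalars indexed by the pieces of a partition can be glued, and
   a scalar vanishing on every piece is zero; both hold coordinatewise.
   Conversely, if the basis contains infinitely many distinct vectors b_k and
   (A_k) is a partition into sets of positive probability, stability yields y
   with 1_{A_k} y = 1_{A_k} b_k for all k.  Being a finite combination of basis
   vectors, y misses some b_k, and independence then forces 1_{A_k} = 0,
   i.e. P(A_k) = 0. *)

Lemma infinite_set_injseq (T : Type) (B : set T) : infinite_set B ->
  exists2 f : nat -> T, (forall n, B (f n)) & injective f.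
Proof.
move=> /infiniteP /card_leP [g].
exists (fun n => val (g (SigSub (mem_set (I : [set: nat] n))))).
  by move=> n; exact: set_valP.
move=> m n /val_inj /(@inj _ _ _ g).
by move=> /(_ (mem_set I) (mem_set I)) [].
Qed.

Lemma injseq_notin (T : eqType) (f : nat -> T) (s : seq T) :
  injective f -> exists k, f k \notin s.
Proof.
move=> injf; apply: contrapT => notin.
have sub : {subset map f (iota 0 (size s).+1) <= s}.
  move=> _ /mapP[k _ ->]; apply: contrapT => fks; apply: notin; exists k.
  exact/negP.
have := uniq_leq_size _ sub; rewrite map_inj_uniq // iota_uniq => /(_ isT).
by rewrite size_map size_iota ltnn.
Qed.

Section LinearCombinations.
Variables (K : pzRingType) (V : lmodType K).

Lemma sum_scale_delta (t : seq V) (b0 : V) (r : K) : uniq t -> b0 \in t ->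
  \sum_(b <- t) (if b == b0 then r else 0) *: b = r *: b0.
Proof.
move=> ut bt; rewrite (bigD1_seq b0) //= eqxx big1 ?addr0 // => b /negbTE ->.
exact: scale0r.
Qed.

Lemma sum_scale_reindex (t s : seq V) (c : V -> K) :
  uniq t -> {subset s <= t} ->
  exists a : V -> K, \sum_(b <- s) c b *: b = \sum_(b <- t) a b *: b
    /\ (forall b, b \notin s -> a b = 0).
Proof.
move=> ut; elim: s => [|b s IH] sub.
  exists (fun _ => 0); split=> //.
  by rewrite big_nil big1 // => b _; rewrite scale0r.
have [|a [Ha Ha0]] := IH.
  by move=> x xs; apply: sub; rewrite in_cons xs orbT.
exists (fun e => a e + (if e == b then c b else 0)); split.
  under [RHS]eq_bigr do rewrite scalerDl.
  rewrite big_cons Ha big_split /= sum_scale_delta ?(sub b (mem_head _ _)) //.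
  by rewrite addrC.
move=> e; rewrite in_cons negb_or => /andP[/negbTE -> es].
by rewrite Ha0 // addr0.
Qed.

End LinearCombinations.

Section L0Scalars.
Context d (T : measurableType d) (R : realType) (P : probability T R).

Lemma L0_pi_eq0 (f : {mfun T >-> R}) :
  (\pi_(L0 P) f = 0)%qT <-> {ae P, forall x, f x = 0}.
Proof.
rewrite -[0 : L0 P](rmorph0 (\pi_(L0 P))%qT); split.
  by move/eqquotP; rewrite /Quotient.equiv subr0 => /asboolP.
by move=> f0; apply/eqquotP; rewrite /Quotient.equiv subr0; exact/asboolP.
Qed.

Lemma L0indE {A : set T} (mA : measurable A) :
  L0ind P A = (\pi_(L0 P) (indic_mfun A mA))%qT.
Proof.
by rewrite /L0ind; case: pselect => // mA'; rewrite (Prop_irrelevance mA' mA).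
Qed.

Lemma L0ind_neq0 (A : set T) : measurable A -> (0 < P A)%E -> L0ind P A <> 0.
Proof.
move=> mA PA; rewrite (L0indE mA) => /L0_pi_eq0 A0.
have /(negligibleP _ mA) PA0 : P.-negligible A.
  apply: negligibleS A0 => x Ax /=; rewrite mindicE mem_set //.
  by move/eqP; rewrite oner_eq0.
by rewrite PA0 ltxx in PA.
Qed.

Variable A : nat -> set T.
Hypothesis partA : meas_partition A.

Lemma partition_xget {k x} : A k x -> xget 0%N [set j | A j x] = k.
Proof.
have [_ tA _] := partA.
by move=> Akx; apply: xget_unique => // j Ajx; apply: tA => //; exists x.
Qed.

Lemma L0_glue (c : nat -> L0 P) :
  exists g : L0 P, forall k, L0ind P (A k) * g = L0ind P (A k) * c k.
Proof.
have [mA _ covA] := partA.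
pose f k : {mfun T >-> R} := repr (c k).
pose g x := f (xget 0%N [set j | A j x]) x.
have mg : measurable_fun setT g.
  rewrite -covA; apply/measurable_fun_bigcup => // k.
  apply: (eq_measurable_fun (f k)).
    by move=> x /set_mem Akx; rewrite /g (partition_xget Akx).
  exact: measurable_funS (measurable_funPT (f k)).
have gmfun : g \in mfun by rewrite inE.
exists (\pi_(L0 P) (mfun_Sub gmfun))%qT => k.
rewrite -(reprK (c k)) (L0indE (mA k)) -!rmorphM; congr (\pi_(L0 P) _)%qT.
apply/mfuneqP => x; rewrite !mfunM /=.
have [Akx|nAkx] := pselect (A k x); first by rewrite /g (partition_xget Akx).
by rewrite mindicE memNset // !mul0r.
Qed.

Lemma L0_eq0_on_partition (g : L0 P) :
  (forall k, L0ind P (A k) * g = 0) -> g = 0.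
Proof.
have [mA _ covA] := partA.
move=> gA0; rewrite -(reprK g); apply/L0_pi_eq0.
have gAk0 k : {ae P, forall x, (indic_mfun (A k) (mA k) * repr g) x = 0}.
  by apply/L0_pi_eq0; rewrite rmorphM /= -(L0indE (mA k)) reprK.
apply: filterS (ae_foralln gAk0) => x gx0.
have [k _ Akx] : (\bigcup_k A k) x by rewrite covA.
by move: (gx0 k); rewrite mfunM /= mindicE mem_set // mul1r.
Qed.

End L0Scalars.

Section FreeModules.
Context d (T : measurableType d) (R : realType) (P : probability T R).
Variable E : lmodType (L0 P).

Lemma spanning_coords (B : set E) (t : seq E) : spanning B -> uniq t ->
  (forall b, B b -> b \in t) ->
  forall v, exists a : E -> L0 P, v = \sum_(b <- t) a b *: b.
Proof.
move=> spanB ut Bt v; have [s [c [sB ->]]] := spanB v.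
have [a [-> _]] := sum_scale_reindex c ut (fun x xs => Bt x (sB x xs)).
by exists a.
Qed.

Lemma lin_indep_scale_notin (B : set E) (b : E) (s : seq E) (c : E -> L0 P)
    (r : L0 P) :
  lin_indep B -> B b -> (forall e, e \in s -> B e) -> b \notin s ->
  r *: b = \sum_(e <- s) c e *: e -> r = 0.
Proof.
move=> indB Bb sB bs rb.
have ut : uniq (b :: undup s) by rewrite /= mem_undup bs undup_uniq.
have sub : {subset s <= b :: undup s}.
  by move=> e es; rewrite in_cons mem_undup es orbT.
have [a [Ha Ha0]] := sum_scale_reindex c ut sub.
have tB e : e \in b :: undup s -> B e.
  by rewrite in_cons mem_undup => /orP[/eqP->|/sB].
have comb0 : \sum_(e <- b :: undup s)
    ((if e == b then r else 0) - a e) *: e = 0.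
  under eq_bigr do rewrite scalerBl.
  rewrite sumrB sum_scale_delta ?mem_head //.
  by rewrite -Ha rb subrr.
have := indB _ _ ut tB comb0 b (mem_head _ _).
by rewrite eqxx Ha0 // subr0.
Qed.

Lemma finite_basis_seq (B : set E) : finite_set B ->
  exists2 t : seq E, uniq t & B = [set b | b \in t].
Proof.
move=> /finite_seqP[s ->]; exists (undup s); first exact: undup_uniq.
by apply/seteqP; split=> b /=; rewrite mem_undup.
Qed.

Section FiniteBasis.
Variable t : seq E.
Hypotheses (ut : uniq t) (basis_t : Defs.basis [set b | b \in t]).

Lemma coords_finite_basis (v : E) : exists a : E -> L0 P,
  v = \sum_(b <- t) a b *: b.
Proof. by apply: spanning_coords basis_t.2 ut _ _. Qed.

Lemma finite_basis_eq0_on_partition (A : nat -> set T) (z : E) :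
  meas_partition A -> (forall k, L0ind P (A k) *: z = 0) -> z = 0.
Proof.
move=> partA zA0; have [a za] := coords_finite_basis z.
have a0 b : b \in t -> a b = 0.
  move=> bt; apply: (L0_eq0_on_partition partA) => k.
  apply: (basis_t.1 t (fun b => L0ind P (A k) * a b) ut) => //.
  rewrite -[RHS](zA0 k) za scaler_sumr.
  by apply: eq_bigr => e _; rewrite scalerA.
by rewrite za big1_seq // => b /andP[_ /a0 ->]; rewrite scale0r.
Qed.

Lemma finite_basis_stable : stable E.
Proof.
move=> A partA x.
have /choice[a xa] := fun k => coords_finite_basis (x k).
have /choice[g Hg] := fun b => L0_glue partA (fun k => a k b).
have gx k : L0ind P (A k) *: \sum_(b <- t) g b *: b = L0ind P (A k) *: x k.
  by rewrite xa !scaler_sumr; apply: eq_bigr => b _; rewrite !scalerA Hg.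
exists (\sum_(b <- t) g b *: b); split=> // y yx.
apply/eqP; rewrite eq_sym -subr_eq0; apply/eqP.
by apply: (finite_basis_eq0_on_partition partA) => k; rewrite scalerBr yx gx subrr.
Qed.

End FiniteBasis.

Lemma stable_basis_finite (B : set E) :
  (exists A : nat -> set T, meas_partition A /\ forall k, (0 < P (A k))%E) ->
  stable E -> Defs.basis B -> finite_set B.
Proof.
move=> [A [partA PA]] stE [indB spanB]; have [mA _ _] := partA.
apply: contrapT => /infinite_set_injseq[b Bb injb].
have [y [yb _]] := stE A partA b.
have [s [c [sB ys]]] := spanB y.
have [k bks] := injseq_notin s injb.
apply: (L0ind_neq0 (mA k) (PA k)).
apply: (lin_indep_scale_notin (c := fun e => L0ind P (A k) * c e) indB (Bb k) sB bks).
by rewrite -yb ys scaler_sumr; apply: eq_bigr => e _; rewrite scalerA.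
Qed.

End FreeModules.

Theorem proposition3p2 (d : measure_display) (T : measurableType d)
  (R : realType) (P : probability T R) :
  (exists A : nat -> set T, meas_partition A /\ forall k, (0 < P (A k))%E) ->
  forall E : lmodType (L0 P), free_module E ->
  (stable E <-> finite_rank E).
Proof.
move=> posA E [B basisB]; split=> [stE | [B' [basisB' finB']]].
  by exists B; split; last exact: stable_basis_finite posA stE basisB.
have [t ut B't] := finite_basis_seq finB'.
by rewrite B't in basisB'; exact: finite_basis_stable ut basisB'.
Qed.
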